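(* Let $\mathscr D:\mathscr N=\mathscr N_1\cup\cdots\cup\mathscr N_k$ be a pairwise binary-sized decomposition of a chemical reaction network $\mathscr N$ with set of common complexes $\mathscr C_{\mathscr D}$. If $P: y-x_1-\cdots-x_q$ is a path in $\mathscr N$ such that $y\in\mathscr C_{\mathscr D}$ while $x_1,\dots,x_q\notin\mathscr C_{\mathscr D}$, then there is exactly one subnetwork $\mathscr N_i$ that contains $P$.
   Context: A CRN $\mathscr N=(\mathscr S,\mathscr C,\mathscr R)$ is viewed as a directed graph with vertex set the complexes $\mathscr C$ and arcs the reactions $\mathscr R$. A path is a path in the underlying undirected graph (consecutive complexes joined by a reaction in either direction); a subnetwork contains a path if each of its edges comes from a reaction of that subnetwork. A decomposition $\mathscr N=\mathscr N_1\cup\cdots\cup\mathscr N_k$ is given by a partition $\{\mathscr R_1,\dots,\mathscr R_k\}$ of $\mathscr R$, $k\ge2$; the subnetwork $\mathscr N_i$ has reaction set $\mathscr R_i$ and complex set $\mathscr C_i$ consisting of the complexes occurring in reactions of $\mathscr R_i$. The set $\mathscr C_{\mathscr D}$ of common complexes consists of all complexes lying in the complex sets of at least two distinct subnetworks; $d=|\mathscr C_{\mathscr D}|$. The decomposition is pairwise binary-sized (PBS) if there are integers $0\le b\le c\le d$ such that $|\mathscr C_i\cap\mathscr C_j|\in\{b,c\}$ for all $i\neq j$. *)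

From mathcomp Require Import all_boot.
Set Implicit Arguments. Unset Strict Implicit. Unset Printing Implicit Defensive.

(* A CRN viewed as a directed graph: complexes [C] (a finite type) and
   reactions [Rx] (a finite type), each reaction having a source (reactant)
   complex [src r] and a target (product) complex [tgt r].  Species play no
   role in this statement. *)

Section CRN.
Variables (C Rx : finType) (src tgt : Rx -> C).

Definition joins (r : Rx) (u v : C) : bool :=
  ((src r == u) && (tgt r == v)) || ((src r == v) && (tgt r == u)).

Definition cplx (B : {set Rx}) : {set C} :=
  [set c | [exists r in B, (src r == c) || (tgt r == c)]].

Definition decomposition (P : {set {set Rx}}) : Prop :=
  partition P [set: Rx] /\ 2 <= #|P|.

Definition common (P : {set {set Rx}}) : {set C} :=
  [set c | [exists B1 in P, exists B2 in P,
             [&& B1 != B2, c \in cplx B1 & c \in cplx B2]]].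

Definition PBS (P : {set {set Rx}}) : Prop :=
  exists b c : nat, [/\ b <= c, c <= #|common P| &
    forall B1 B2, B1 \in P -> B2 \in P -> B1 != B2 ->
      #|cplx B1 :&: cplx B2| = b \/ #|cplx B1 :&: cplx B2| = c].

Definition path_in (B : {set Rx}) (s : seq C) : Prop :=
  forall i, i.+1 < size s ->
    exists r, r \in B /\ joins r (nth (src r) s i) (nth (src r) s i.+1).

Definition is_path (s : seq C) : Prop := uniq s /\ path_in [set: Rx] s.

Definition contains (B : {set Rx}) (s : seq C) : Prop := path_in B s.

End CRN.

From mathcomp Require Import all_boot.

Set Implicit Arguments. Unset Strict Implicit. Unset Printing Implicit Defensive.

(* A complex x outside C_D lies in the complex set of a single block, so every
   reaction at x belongs to that block.  Walking along x_1 - ... - x_q, all of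
   whose vertices are outside C_D, every edge therefore stays in the block N_i
   of the reaction y - x_1; any block containing the path contains x_1, hence
   is N_i. *)

Section Adjacency.
Variables (C Rx : finType) (src tgt : Rx -> C).

Definition adjacent (B : {set Rx}) (u v : C) : bool :=
  [exists r in B, joins src tgt r u v].

Lemma path_in_adjacent (B : {set Rx}) x s :
  path_in src tgt B (x :: s) <-> path (adjacent B) x s.
Proof.
split=> [pB | /(pathP x) pB i lt_i_s].
- apply/(pathP x) => i lt_i_s; have [r [rB]] := pB i lt_i_s.
  rewrite !(set_nth_default x) //= => [jr|]; last exact: ltnW.
  by apply/existsP; exists r; rewrite rB.
- have /existsP[r /andP[rB jr]] := pB i lt_i_s.
  exists r; split=> //.
  by rewrite !(set_nth_default x) //; exact: ltnW.
Qed.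

Lemma joins_cplx (B : {set Rx}) r u v : r \in B -> joins src tgt r u v ->
  (u \in cplx src tgt B) && (v \in cplx src tgt B).
Proof.
move=> rB /orP[|] /andP[/eqP<- /eqP<-]; rewrite !inE;
  by apply/andP; split; apply/existsP; exists r; rewrite rB ?eqxx ?orbT.
Qed.

Lemma adjacent_cplx (B : {set Rx}) u v : adjacent B u v ->
  (u \in cplx src tgt B) && (v \in cplx src tgt B).
Proof. by case/existsP=> r /andP[]; exact: joins_cplx. Qed.

End Adjacency.

Section Decomposition.
Variables (C Rx : finType) (src tgt : Rx -> C) (P : {set {set Rx}}).
Hypothesis coverP : cover P = [set: Rx].

Lemma cplx_notin_common_eq x B1 B2 :
  x \notin common src tgt P -> B1 \in P -> B2 \in P ->
  x \in cplx src tgt B1 -> x \in cplx src tgt B2 -> B1 = B2.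
Proof.
move=> ncx B1P B2P xB1 xB2; apply/eqP; apply: contraNT ncx => neB.
by rewrite inE; apply/existsP; exists B1; rewrite B1P /=;
  apply/existsP; exists B2; rewrite B2P neB xB1 xB2.
Qed.

Lemma adjacent_block u v : adjacent src tgt [set: Rx] u v ->
  exists2 B, B \in P & adjacent src tgt B u v.
Proof.
case/existsP=> r /andP[_ jr]; have rP : r \in cover P by rewrite coverP inE.
exists (pblock P r); first exact: pblock_mem.
by apply/existsP; exists r; rewrite mem_pblock rP.
Qed.

Lemma adjacent_notin_common B x v :
  B \in P -> x \in cplx src tgt B -> x \notin common src tgt P ->
  adjacent src tgt [set: Rx] x v -> adjacent src tgt B x v.
Proof.
move=> BP xB ncx /adjacent_block[B' B'P adj'].
have /andP[xB' _] := adjacent_cplx adj'.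
by rewrite (cplx_notin_common_eq ncx BP B'P xB xB').
Qed.

Lemma path_notin_common B x s :
  B \in P -> x \in cplx src tgt B ->
  {in x :: s, forall z, z \notin common src tgt P} ->
  path (adjacent src tgt [set: Rx]) x s -> path (adjacent src tgt B) x s.
Proof.
move=> BP; elim: s x => [//|z s IHs] x xB nc /= /andP[adj_xz pz].
have adjB : adjacent src tgt B x z.
  by apply: adjacent_notin_common adj_xz => //; apply: nc; exact: mem_head.
have /andP[_ zB] := adjacent_cplx adjB.
rewrite adjB IHs // => w w_in; apply: nc; exact: mem_behead.
Qed.

End Decomposition.

Theorem lemma2 (C Rx : finType) (src tgt : Rx -> C)
    (P : {set {set Rx}}) (y : C) (xs : seq C) :
  decomposition P -> PBS src tgt P ->
  0 < size xs ->
  is_path src tgt (y :: xs) ->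
  y \in common src tgt P ->
  (forall x, x \in xs -> x \notin common src tgt P) ->
  exists! B : {set Rx}, B \in P /\ contains src tgt B (y :: xs).
Proof.
move=> [/and3P[/eqP coverP _ _] _] _; case: xs => [//|x xs] _.
move=> [_ /path_in_adjacent /= /andP[adj_yx pN]] _ nc.
have [B BP adjB] := adjacent_block coverP adj_yx.
have /andP[_ xB] := adjacent_cplx adjB.
exists B; split.
- split=> //; apply/path_in_adjacent; rewrite /= adjB /=.
  exact: (path_notin_common coverP BP xB nc pN).
- move=> B' [B'P /path_in_adjacent /= /andP[adjB' _]].
  have /andP[_ xB'] := adjacent_cplx adjB'.
  exact: cplx_notin_common_eq (nc x (mem_head x xs)) BP B'P xB xB'.
Qed.
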